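(* Let $(X,d)$ be a metric space, let $k\ge 1$ and let $p_1,\dots,p_k\in X$ be arbitrary points. For $p\in X$ define $\mu_p(x,y)=d(x,y)+\sqrt{d(x,p)d(y,p)}$. Then for all $x,y,z\in X$, $$\prod_{i=1}^k\big(\mu_{p_i}(x,z)+\mu_{p_i}(y,z)\big)\leq 9^k\Big(\prod_{i=1}^k\mu_{p_i}(x,z)+\prod_{i=1}^k\mu_{p_i}(y,z)\Big).$$ *)

From mathcomp Require Import all_boot all_order all_algebra.
Set Implicit Arguments. Unset Strict Implicit. Unset Printing Implicit Defensive.
Import Order.TTheory GRing.Theory Num.Theory.
Local Open Scope ring_scope.

Definition is_metric (R : realFieldType) (T : Type) (d : T -> T -> R) : Prop :=
  [/\ forall x y, 0 <= d x y,
      forall x y, d x y = 0 <-> x = y,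
      forall x y, d x y = d y x
    & forall x y z, d x z <= d x y + d y z].

Definition mu (R : rcfType) (T : Type) (d : T -> T -> R) (p x y : T) : R :=
  d x y + Num.sqrt (d x p * d y p).

From mathcomp Require Import all_boot all_order all_algebra.
From mathcomp Require Import lra.
Set Implicit Arguments.
Unset Strict Implicit.
Unset Printing Implicit Defensive.

Import Order.TTheory GRing.Theory Num.Theory.
Local Open Scope ring_scope.

(* If d(y,z) <= d(x,z), then mu_p(y,z) <= 4 mu_p(x,z) for every p: the
   triangle inequality gives sqrt(d(y,p) d(z,p)) <= d(x,z) + d(z,p), and
   d(z,p) <= 2 d(x,z) + 2 sqrt(d(x,p) d(z,p)) because d(z,p) > 2 d(x,z) forces
   d(x,p) >= d(z,p) / 2.  Hence, when z is closer to y than to x, every factor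
   mu_p(x,z) + mu_p(y,z) is at most 5 <= 1 + 8 times mu_p(x,z). *)

Lemma sqrtr_le_of_le_sqr (R : rcfType) (a b : R) : 0 <= b -> a <= b ^+ 2 -> Num.sqrt a <= b.
Proof.
by move=> b_ge0 le_ab; rewrite -(ger0_norm b_ge0) -sqrtr_sqr ler_wsqrtr.
Qed.

Lemma le_sqrtr_of_sqr_le (R : rcfType) (a b : R) : 0 <= b -> b ^+ 2 <= a -> b <= Num.sqrt a.
Proof.
by move=> b_ge0 le_ba; rewrite -(ger0_norm b_ge0) -sqrtr_sqr ler_wsqrtr.
Qed.

Lemma prodD_le_scaled_prod (R : numDomainType) (I : finType) (c : R)
    (a b : I -> R) :
  (forall i, 0 <= a i) -> (forall i, 0 <= b i) -> (forall i, b i <= c * a i) ->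
  \prod_i (a i + b i) <= (1 + c) ^+ #|I| * \prod_i a i.
Proof.
move=> a_ge0 b_ge0 le_ba; rewrite -prodrMl.
apply: ler_prod => i _; rewrite addr_ge0 //=.
by rewrite mulrDl mul1r lerD2l.
Qed.

Section PointedMetric.

Variables (R : rcfType) (T : Type) (d : T -> T -> R).
Hypothesis d_metric : is_metric d.

Lemma mu_ge0 (p x y : T) : 0 <= mu d p x y.
Proof. by case: d_metric => d_ge0 _ _ _; rewrite addr_ge0 ?sqrtr_ge0. Qed.

Lemma mu_le4 (p x y z : T) : d y z <= d x z -> mu d p y z <= 4 * mu d p x z.
Proof.
case: d_metric => d_ge0 _ dC d_triangle; rewrite /mu.
set D := d x z; set E := d y z; set u := d z p; set v := d x p; set w := d y p.
move=> le_ED.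
have D_ge0 : 0 <= D := d_ge0 x z.
have u_ge0 : 0 <= u := d_ge0 z p.
have v_ge0 : 0 <= v := d_ge0 x p.
have w_le : w <= E + u := d_triangle y z p.
have u_le_Dv : u <= D + v by rewrite /D dC d_triangle.
have t_ge0 := sqrtr_ge0 (v * u).
have sqrt_wu_le : Num.sqrt (w * u) <= D + u by apply: sqrtr_le_of_le_sqr; nra.
have u_le : u <= 2 * D + 2 * Num.sqrt (v * u).
  have [|lt_2D_u] := lerP u (2 * D); first lra.
  have : u / 2 <= Num.sqrt (v * u) by apply: le_sqrtr_of_sqr_le; [lra | nra].
  lra.
lra.
Qed.

End PointedMetric.

Theorem lemma3p3 (R : rcfType) (T : Type) (d : T -> T -> R)
  (hd : is_metric d) (k : nat) (hk : (1 <= k)%N) (p : 'I_k -> T) (x y z : T) :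
  \prod_(i < k) (mu d (p i) x z + mu d (p i) y z)
  <= 9 ^+ k * (\prod_(i < k) mu d (p i) x z + \prod_(i < k) mu d (p i) y z).
Proof.
wlog le_yx : x y / d y z <= d x z.
  move=> wlog_yx; have [|/ltW lt_xy] := lerP (d y z) (d x z); first exact: wlog_yx.
  by rewrite addrC; under eq_bigr do rewrite addrC; exact: wlog_yx.
have mu_le8 i : mu d (p i) y z <= 8 * mu d (p i) x z.
  apply: le_trans (mu_le4 hd (p i) le_yx) _.
  by rewrite ler_wpM2r ?mu_ge0 ?ler_nat.
have mu_ge0_at a i : 0 <= mu d (p i) a z by exact: mu_ge0.
apply: le_trans (prodD_le_scaled_prod (mu_ge0_at x) (mu_ge0_at y) mu_le8) _.
rewrite card_ord (_ : 1 + 8 = 9 :> R); last lra.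
by rewrite ler_wpM2l ?exprn_ge0 // lerDl prodr_ge0.
Qed.
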